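(* There is a meta-extendable collection of admissible sets $S_0,S_1,S_2\subseteq\{0,1,2\}^{11}$ such that $S_1$ and $S_2$ are each admissible sets consisting of $\binom{11}{7}$ vectors of weight $7$, and $S_0$ is an admissible set of $37$ vectors, each of weight $3$ (with pairwise distinct supports).
   Context: A set $S\subseteq\{0,1,2\}^m$ is admissible if (1) for all distinct $s,s'\in S$ there are coordinates $i,j$ with $s_i=0\neq s'_i$ and $s_j\neq 0=s'_j$; and (2) for all distinct $s,s',s''\in S$ there is a coordinate $k$ such that the multiset $\{s_k,s'_k,s''_k\}$ equals $\{0,1,2\}$, $\{0,0,1\}$ or $\{0,0,2\}$. The weight of a vector is its number of nonzero coordinates, its support the set of nonzero coordinates. A collection $S_0,S_1,S_2\subseteq\{0,1,2\}^m$ of admissible sets is meta-extendable if: (1) for any $s\in S_0$ and $s'\in S_1\cup S_2$, the weight of $s$ is less than the weight of $s'$; (2) whenever $x,y\in S_0$ (not necessarily distinct) and $z\in S_1\cup S_2$, there is a coordinate $k$ with the multiset $\{x_k,y_k,z_k\}$ equal to $\{0,1,2\}$, $\{0,0,1\}$ or $\{0,0,2\}$; (3) whenever $x\in S_0$, $y\in S_1$, $z\in S_2$, there is a coordinate $k$ with the multiset $\{x_k,y_k,z_k\}$ equal to $\{0,1,2\}$, $\{0,0,1\}$ or $\{0,0,2\}$. *)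

From mathcomp Require Import all_boot.
Set Implicit Arguments. Unset Strict Implicit. Unset Printing Implicit Defensive.

Definition vec (m : nat) := {ffun 'I_m -> 'I_3}.

Definition good_triple (a b c : 'I_3) : bool :=
  let l := [:: nat_of_ord a; nat_of_ord b; nat_of_ord c] in
  [|| perm_eq l [:: 0; 1; 2], perm_eq l [:: 0; 0; 1] | perm_eq l [:: 0; 0; 2]].

Definition covered (m : nat) (x y z : vec m) : bool :=
  [exists k : 'I_m, good_triple (x k) (y k) (z k)].

Definition supp (m : nat) (s : vec m) : {set 'I_m} := [set i | nat_of_ord (s i) != 0].
Definition weight (m : nat) (s : vec m) : nat := #|supp s|.

Definition admissible (m : nat) (S : {set vec m}) : Prop :=
  (forall s s', s \in S -> s' \in S -> s != s' ->
     exists i j : 'I_m, [/\ nat_of_ord (s i) = 0, nat_of_ord (s' i) != 0,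
                            nat_of_ord (s j) != 0 & nat_of_ord (s' j) = 0]) /\
  (forall s s' s'', s \in S -> s' \in S -> s'' \in S ->
     s != s' -> s != s'' -> s' != s'' -> covered s s' s'').

Definition meta_extendable (m : nat) (S0 S1 S2 : {set vec m}) : Prop :=
  [/\ [/\ admissible S0, admissible S1 & admissible S2],
      (forall s s', s \in S0 -> s' \in S1 :|: S2 -> weight s < weight s'),
      (forall x y z, x \in S0 -> y \in S0 -> z \in S1 :|: S2 -> covered x y z) &
      (forall x y z, x \in S0 -> y \in S1 -> z \in S2 -> covered x y z)].

From mathcomp Require Import all_boot ssralg zmodp.
Set Implicit Arguments. Unset Strict Implicit. Unset Printing Implicit Defensive.
Import GRing.Theory.

(* S0 and S1 are an explicit certificate, S1 having one vector on each of the
   'C(11, 7) supports of size 7; S2 is -S1, where negation in Z/3 swaps the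
   nonzero values 1 and 2.  Negation preserves the good multisets {0,1,2},
   {0,0,1} and {0,0,2}, so S2 inherits admissibility and weights from S1.
   Condition (1) of admissibility is automatic for vectors of equal weight and
   distinct supports, since neither support can then contain the other.  What
   remains are finitely many covering conditions, decided by evaluation on an
   encoding of the vectors as lists of naturals. *)

Lemma pairwise_neq (T : eqType) (r : rel T) (s : seq T) :
  symmetric r -> pairwise r s -> {in s &, forall x y, x != y -> r x y}.
Proof.
move=> r_sym pw_r x y xs ys neq_xy.
pose r' x y := (x == y) || r x y.
have r'_refl : reflexive r' by move=> z; rewrite /r' eqxx.
have r'_sym : symmetric r' by move=> u v; rewrite /r' eq_sym r_sym.
have : pairwise r' s by apply: sub_pairwise pw_r => u v ruv; rewrite /r' ruv orbT.
rewrite pairwise_all2rel // => /allrelP/(_ x y xs ys).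
by rewrite /r' (negbTE neq_xy).
Qed.

Fixpoint triplewise (T : Type) (R : T -> T -> T -> bool) (s : seq T) : bool :=
  if s is x :: s' then pairwise (R x) s' && triplewise R s' else true.

Lemma triplewise_neq (T : eqType) (R : T -> T -> T -> bool) (s : seq T) :
  (forall x y z, R x y z = R y x z) -> (forall x y z, R x y z = R x z y) ->
  triplewise R s -> {in s & &, forall x y z, x != y -> x != z -> y != z -> R x y z}.
Proof.
move=> R12 R23; elim: s => // a s IH /andP[pw_a tw_s] x y z.
have Ra := pairwise_neq (R23 a) pw_a.
move=> /predU1P[->|xs] /predU1P[->|ys] /predU1P[->|zs]; rewrite ?eqxx // => xy xz yz.
- exact: Ra.
- by rewrite R12; apply: Ra.
- by rewrite R23 R12; apply: Ra.
- exact: IH.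
Qed.

Lemma uniq_map_inj_in (T1 T2 : eqType) (f : T1 -> T2) (s : seq T1) :
  uniq (map f s) -> {in s &, injective f}.
Proof.
elim: s => // a s IH /andP[fa_notin uniq_fs] x y.
move=> /predU1P[->|xs] /predU1P[->|ys] // eq_f.
- by move: fa_notin; rewrite eq_f map_f.
- by move: fa_notin; rewrite -eq_f map_f.
- exact: IH.
Qed.

Lemma card_nth_count (T : Type) (x0 : T) (P : pred T) (l : seq T) :
  #|[set i : 'I_(size l) | P (nth x0 l i)]| = count P l.
Proof.
rewrite cardsE cardE /enum_mem size_filter -enumT.
rewrite -[in RHS](mkseq_nth x0 l) /mkseq -val_enum_ord count_map count_map.
exact: eq_count.
Qed.

Section Admissibility.
Variable m : nat.
Implicit Types (s : vec m) (S : {set vec m}).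

Lemma supp_separated s s' : weight s = weight s' -> supp s != supp s' ->
  exists i j : 'I_m, [/\ nat_of_ord (s i) = 0, nat_of_ord (s' i) != 0,
                         nat_of_ord (s j) != 0 & nat_of_ord (s' j) = 0].
Proof.
move=> eq_w neq_supp.
have not_sub (A B : {set 'I_m}) : #|A| = #|B| -> A != B -> ~~ (A \subset B).
  by move=> eqAB; apply: contra => sAB; rewrite eqEcard sAB eqAB /=.
have /subsetPn[i s'i si] : ~~ (supp s' \subset supp s) by rewrite not_sub // eq_sym.
have /subsetPn[j sj s'j] := not_sub _ _ eq_w neq_supp.
by exists i, j; move: s'i si sj s'j; rewrite !inE !negbK => -> /eqP -> -> /eqP ->.
Qed.

Lemma admissible_of_weight S n :
  {in S, forall s, weight s = n} -> {in S &, injective (@supp m)} ->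
  (forall s s' s'', s \in S -> s' \in S -> s'' \in S ->
     s != s' -> s != s'' -> s' != s'' -> covered s s' s'') ->
  admissible S.
Proof.
move=> wS suppS covS; split=> // s s' Ss Ss' neq_ss'.
apply: supp_separated; first by rewrite !wS.
by apply: contra neq_ss' => /eqP/suppS-> //.
Qed.

End Admissibility.

Section Negation.
Variable m : nat.
Implicit Types (s x y z : vec m) (S : {set vec m}).
Local Open Scope ring_scope.

Lemma good_triple_opp (a b c : 'I_3) : good_triple (- a) (- b) (- c) = good_triple a b c.
Proof. by case: a b c => [[|[|[|?]]] ?] [[|[|[|?]]] ?] [[|[|[|?]]] ?]. Qed.

Lemma opp_vec_eq0 s i : (nat_of_ord ((- s) i) == 0%N) = (nat_of_ord (s i) == 0%N).
Proof. by rewrite ffunE; exact: (oppr_eq0 (s i)). Qed.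

Lemma supp_opp s : supp (- s) = supp s.
Proof. by apply/setP => i; rewrite !inE opp_vec_eq0. Qed.

Lemma weight_opp s : weight (- s) = weight s.
Proof. by rewrite /weight supp_opp. Qed.

Lemma covered_opp x y z : covered (- x) (- y) (- z) = covered x y z.
Proof. by apply: eq_existsb => k; rewrite !ffunE good_triple_opp. Qed.

Lemma mem_opp_set S s : (s \in [set - t | t : vec m in S]) = (- s \in S).
Proof.
have oppK : involutive (fun s : vec m => - s) := opprK.
by rewrite (can2_imset_pre _ oppK oppK) inE.
Qed.

Lemma admissible_opp S : admissible S -> admissible [set - t | t : vec m in S].
Proof.
case=> sepS covS; split=> [s s' | s s' s'']; rewrite !mem_opp_set.
  move=> Ss Ss' neq_ss'; have [|i [j [/eqP si s'i sj /eqP s'j]]] := sepS _ _ Ss Ss'.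
    by rewrite (inj_eq oppr_inj).
  rewrite !opp_vec_eq0 in si s'i sj s'j.
  by exists i, j; split=> //; apply/eqP.
move=> Ss Ss' Ss'' ne_ss' ne_ss'' ne_s's''; rewrite -covered_opp.
by apply: covS; rewrite // (inj_eq oppr_inj).
Qed.

End Negation.

Definition good_nat (a b c : nat) : bool :=
  match a, b, c with
  | 0, 0, 0 => false
  | 0, 0, _ | 0, _, 0 | _, 0, 0 => true
  | 0, _, _ => b != c
  | _, 0, _ => a != c
  | _, _, 0 => a != b
  | _, _, _ => false
  end.

Lemma good_tripleE (a b c : 'I_3) : good_triple a b c = good_nat a b c.
Proof. by case: a b c => [[|[|[|?]]] ?] [[|[|[|?]]] ?] [[|[|[|?]]] ?]. Qed.

Lemma good_natC12 a b c : good_nat a b c = good_nat b a c.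
Proof. by case: a b c => [|a] [|b] [|c] //=; rewrite eq_sym. Qed.

Lemma good_natC23 a b c : good_nat a b c = good_nat a c b.
Proof. by case: a b c => [|a] [|b] [|c] //=; rewrite eq_sym. Qed.

Fixpoint covers (x y z : seq nat) : bool :=
  match x, y, z with
  | a :: x', b :: y', c :: z' => good_nat a b c || covers x' y' z'
  | _, _, _ => false
  end.

Lemma coversC12 x y z : covers x y z = covers y x z.
Proof. by elim: x y z => [|a x IH] [|b y] [|c z] //=; rewrite good_natC12 IH. Qed.

Lemma coversC23 x y z : covers x y z = covers x z y.
Proof. by elim: x y z => [|a x IH] [|b y] [|c z] //=; rewrite good_natC23 IH. Qed.

Lemma coversP x y z : covers x y z ->
  exists2 k, k < size x & good_nat (nth 0 x k) (nth 0 y k) (nth 0 z k).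
Proof.
elim: x y z => [|a x IH] [|b y] [|c z] //= /orP[abc | /IH[k lt_k good_k]].
  by exists 0.
by exists k.+1.
Qed.

Section Encoding.
Variable m : nat.

Definition ternary (l : seq nat) : bool := (size l == m) && all (fun a => a < 3) l.

Definition vec_of_seq (l : seq nat) : vec m := [ffun i : 'I_m => inord (nth 0 l i)].

Definition set_of_seqs (L : seq (seq nat)) : {set vec m} := [set v in map vec_of_seq L].

Lemma vec_of_seqE l i : ternary l -> vec_of_seq l i = nth 0 l i :> nat.
Proof.
case/andP=> /eqP size_l /allP lt_l3; rewrite ffunE inordK //.
by apply: lt_l3; rewrite mem_nth // size_l.
Qed.

Lemma vec_of_seq_inj : {in ternary &, injective vec_of_seq}.
Proof.
move=> x y tx ty eq_xy; have /andP[/eqP size_x _] := tx; have /andP[/eqP size_y _] := ty.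
apply: (@eq_from_nth _ 0) => [|k]; first by rewrite size_x size_y.
by rewrite size_x => lt_km; rewrite -(vec_of_seqE (Ordinal lt_km) tx) eq_xy vec_of_seqE.
Qed.

Definition nonzero_pattern (l : seq nat) : seq bool := map (fun a => a != 0) l.

Lemma supp_vec_of_seq l :
  ternary l -> supp (vec_of_seq l) = [set i : 'I_m | nth false (nonzero_pattern l) i].
Proof.
move=> tl; have /andP[/eqP size_l _] := tl.
by apply/setP => i; rewrite !inE vec_of_seqE // (nth_map 0) // size_l.
Qed.

Lemma weight_vec_of_seq l : ternary l -> weight (vec_of_seq l) = count (fun a => a != 0) l.
Proof.
move=> tl; have /andP[/eqP size_l _] := tl.
have := card_nth_count false id (nonzero_pattern l).
by rewrite /weight supp_vec_of_seq // size_map size_l count_map.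
Qed.

Lemma nonzero_pattern_inj : {in ternary &, forall x y,
  supp (vec_of_seq x) = supp (vec_of_seq y) -> nonzero_pattern x = nonzero_pattern y}.
Proof.
move=> x y tx ty; have /andP[/eqP size_x _] := tx; have /andP[/eqP size_y _] := ty.
rewrite !supp_vec_of_seq // => /setP eq_supp.
apply: (@eq_from_nth _ false) => [|k]; first by rewrite !size_map size_x size_y.
by rewrite size_map size_x => lt_km; have := eq_supp (Ordinal lt_km); rewrite !inE.
Qed.

Lemma covered_vec_of_seq x y z : ternary x -> ternary y -> ternary z ->
  covers x y z -> covered (vec_of_seq x) (vec_of_seq y) (vec_of_seq z).
Proof.
move=> tx ty tz /coversP[k]; have /andP[/eqP -> _] := tx => lt_km good_k.
by apply/existsP; exists (Ordinal lt_km); rewrite good_tripleE !vec_of_seqE.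
Qed.

Lemma set_of_seqsP L s : s \in set_of_seqs L -> exists2 l, l \in L & s = vec_of_seq l.
Proof. by rewrite inE => /mapP. Qed.

Lemma set_of_seqs_cat L1 L2 : set_of_seqs (L1 ++ L2) = set_of_seqs L1 :|: set_of_seqs L2.
Proof. by apply/setP => s; rewrite !inE map_cat mem_cat. Qed.

Definition codes_of_weight n (L : seq (seq nat)) : bool :=
  [&& all ternary L, all (fun l => count (fun a => a != 0) l == n) L
    & uniq (map nonzero_pattern L)].

Section CodesOfWeight.
Variables (n : nat) (L : seq (seq nat)).
Hypothesis cwL : codes_of_weight n L.

Lemma weight_set_of_seqs : {in set_of_seqs L, forall s, weight s = n}.
Proof.
case/and3P: cwL => /allP tL /allP wL _ s /set_of_seqsP[l Ll ->].
by rewrite weight_vec_of_seq ?tL //; apply/eqP/wL.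
Qed.

Lemma supp_inj_set_of_seqs : {in set_of_seqs L &, injective (@supp m)}.
Proof.
case/and3P: cwL => /allP tL _ uL _ _ /set_of_seqsP[x Lx ->] /set_of_seqsP[y Ly ->] eq_supp.
congr vec_of_seq; apply: (uniq_map_inj_in uL) => //.
exact: nonzero_pattern_inj (tL x Lx) (tL y Ly) eq_supp.
Qed.

Lemma card_set_of_seqs : #|set_of_seqs L| = size L.
Proof.
case/and3P: cwL => /allP tL _ uL.
have inj_L : {in L &, injective vec_of_seq}.
  by move=> x y Lx Ly; apply: vec_of_seq_inj; apply: tL.
by rewrite cardsE (card_uniqP _) ?size_map // (map_inj_in_uniq inj_L) (map_uniq uL).
Qed.

Lemma admissible_set_of_seqs : triplewise covers L -> admissible (set_of_seqs L).
Proof.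
case/and3P: cwL => /allP tL _ _ twL.
apply: admissible_of_weight weight_set_of_seqs supp_inj_set_of_seqs _.
move=> _ _ _ /set_of_seqsP[x Lx ->] /set_of_seqsP[y Ly ->] /set_of_seqsP[z Lz ->] nxy nxz nyz.
apply: covered_vec_of_seq; rewrite ?tL //.
have neq_of_vec u v : vec_of_seq u != vec_of_seq v -> u != v by apply: contraNneq => ->.
by apply: (triplewise_neq coversC12 coversC23 twL) => //; apply: neq_of_vec.
Qed.

End CodesOfWeight.

Lemma covered_set_of_seqs X Y Z : all ternary X -> all ternary Y -> all ternary Z ->
  all (fun x => allrel (covers x) Y Z) X ->
  {in set_of_seqs X & set_of_seqs Y & set_of_seqs Z, forall x y z, covered x y z}.
Proof.
move=> /allP tX /allP tY /allP tZ /allP covXYZ.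
move=> _ _ _ /set_of_seqsP[x Xx ->] /set_of_seqsP[y Yy ->] /set_of_seqsP[z Zz ->].
apply: covered_vec_of_seq; [exact: tX | exact: tY | exact: tZ |].
exact: (allrelP (covXYZ x Xx)).
Qed.

Definition opp_seq (l : seq nat) : seq nat := map (fun a => (3 - a) %% 3) l.

Lemma ternary_opp_seq l : ternary l -> ternary (opp_seq l).
Proof.
case/andP=> size_l _; rewrite /ternary size_map size_l all_map.
by apply/allP => a _; rewrite /= ltn_pmod.
Qed.

Local Open Scope ring_scope.

Lemma vec_of_opp_seq l : ternary l -> vec_of_seq (opp_seq l) = - vec_of_seq l.
Proof.
move=> tl; apply/ffunP => i; rewrite [RHS]ffunE; apply: val_inj.
rewrite /= !vec_of_seqE ?ternary_opp_seq // (nth_map 0%N) //.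
by case/andP: tl => /eqP ->.
Qed.

Lemma set_of_opp_seqs L :
  all ternary L -> set_of_seqs (map opp_seq L) = [set - t | t : vec m in set_of_seqs L].
Proof.
move=> /allP tL; apply/setP => s; rewrite mem_opp_set !inE -map_comp.
have -> : map (vec_of_seq \o opp_seq) L = map (fun s : vec m => - s) (map vec_of_seq L).
  by rewrite -map_comp; apply/eq_in_map => l Ll; rewrite /= vec_of_opp_seq ?tL.
by rewrite -[s in LHS]opprK (mem_map oppr_inj).
Qed.

End Encoding.

Definition L0 : seq (seq nat) := [::
  [:: 0; 0; 0; 0; 0; 0; 0; 0; 1; 1; 1];
  [:: 0; 0; 0; 0; 0; 0; 0; 2; 0; 2; 2];
  [:: 0; 0; 0; 0; 0; 0; 0; 2; 2; 0; 2];
  [:: 0; 0; 0; 0; 0; 0; 1; 1; 0; 0; 1];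
  [:: 0; 0; 0; 0; 0; 1; 1; 0; 0; 1; 0];
  [:: 0; 0; 0; 0; 0; 1; 1; 0; 1; 0; 0];
  [:: 0; 0; 0; 0; 1; 1; 0; 0; 0; 1; 0];
  [:: 0; 0; 0; 0; 2; 0; 0; 0; 0; 2; 2];
  [:: 0; 0; 0; 0; 2; 0; 2; 2; 0; 0; 0];
  [:: 0; 0; 0; 0; 2; 2; 2; 0; 0; 0; 0];
  [:: 0; 0; 0; 1; 0; 0; 1; 0; 0; 0; 1];
  [:: 0; 0; 0; 1; 0; 1; 0; 0; 0; 0; 1];
  [:: 0; 0; 0; 2; 0; 0; 0; 0; 0; 2; 2];
  [:: 0; 0; 0; 2; 0; 2; 0; 2; 0; 0; 0];
  [:: 0; 0; 0; 2; 2; 0; 0; 2; 0; 0; 0];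
  [:: 0; 0; 1; 0; 0; 1; 0; 0; 1; 0; 0];
  [:: 0; 0; 1; 1; 0; 0; 0; 0; 1; 0; 0];
  [:: 0; 0; 1; 1; 0; 0; 1; 0; 0; 0; 0];
  [:: 0; 0; 2; 0; 0; 0; 0; 0; 0; 2; 2];
  [:: 0; 0; 2; 0; 0; 2; 2; 0; 0; 0; 0];
  [:: 0; 0; 2; 0; 2; 0; 0; 2; 0; 0; 0];
  [:: 0; 1; 0; 0; 0; 0; 0; 1; 0; 1; 0];
  [:: 0; 1; 0; 0; 0; 1; 0; 0; 1; 0; 0];
  [:: 0; 1; 0; 1; 0; 0; 0; 0; 1; 0; 0];
  [:: 0; 1; 1; 0; 0; 0; 0; 0; 0; 0; 1];
  [:: 0; 1; 1; 0; 0; 0; 1; 0; 0; 0; 0];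
  [:: 0; 2; 0; 0; 0; 0; 0; 0; 2; 0; 2];
  [:: 0; 2; 2; 0; 0; 0; 0; 2; 0; 0; 0];
  [:: 1; 0; 0; 0; 0; 0; 0; 0; 1; 0; 1];
  [:: 1; 0; 0; 0; 1; 0; 0; 0; 0; 1; 0];
  [:: 1; 0; 0; 1; 0; 0; 1; 0; 0; 0; 0];
  [:: 1; 0; 1; 0; 0; 0; 0; 0; 1; 0; 0];
  [:: 2; 0; 0; 0; 0; 0; 0; 2; 0; 0; 2];
  [:: 2; 0; 0; 2; 0; 2; 0; 0; 0; 0; 0];
  [:: 2; 0; 2; 0; 2; 0; 0; 0; 0; 0; 0];
  [:: 2; 0; 2; 2; 0; 0; 0; 0; 0; 0; 0];
  [:: 2; 2; 0; 0; 0; 0; 2; 0; 0; 0; 0]].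
Definition L1 : seq (seq nat) := [::
  [:: 2; 1; 2; 1; 1; 1; 2; 0; 0; 0; 0];
  [:: 1; 1; 1; 2; 1; 1; 0; 1; 0; 0; 0];
  [:: 1; 2; 1; 1; 2; 1; 0; 0; 2; 0; 0];
  [:: 1; 2; 2; 2; 1; 1; 0; 0; 0; 1; 0];
  [:: 1; 2; 1; 1; 1; 2; 0; 0; 0; 0; 2];
  [:: 2; 1; 2; 2; 1; 0; 1; 1; 0; 0; 0];
  [:: 1; 1; 2; 1; 2; 0; 2; 0; 1; 0; 0];
  [:: 1; 2; 2; 2; 1; 0; 1; 0; 0; 1; 0];
  [:: 1; 1; 2; 1; 1; 0; 1; 0; 0; 0; 1];
  [:: 1; 1; 2; 1; 1; 0; 0; 2; 2; 0; 0];
  [:: 2; 1; 1; 1; 2; 0; 0; 1; 0; 2; 0];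
  [:: 2; 1; 1; 2; 1; 0; 0; 2; 0; 0; 1];
  [:: 1; 2; 2; 2; 1; 0; 0; 0; 1; 1; 0];
  [:: 2; 2; 2; 1; 1; 0; 0; 0; 1; 0; 1];
  [:: 2; 1; 1; 1; 2; 0; 0; 0; 0; 2; 1];
  [:: 1; 2; 1; 1; 0; 1; 2; 2; 0; 0; 0];
  [:: 2; 1; 1; 1; 0; 1; 1; 0; 1; 0; 0];
  [:: 1; 1; 1; 2; 0; 1; 2; 0; 0; 2; 0];
  [:: 1; 2; 2; 1; 0; 1; 1; 0; 0; 0; 2];
  [:: 1; 1; 2; 2; 0; 1; 0; 2; 1; 0; 0];
  [:: 1; 2; 2; 1; 0; 1; 0; 1; 0; 2; 0];
  [:: 1; 2; 1; 2; 0; 2; 0; 1; 0; 0; 1];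
  [:: 2; 1; 2; 1; 0; 1; 0; 0; 2; 1; 0];
  [:: 2; 2; 2; 1; 0; 1; 0; 0; 1; 0; 1];
  [:: 1; 2; 1; 1; 0; 1; 0; 0; 0; 1; 1];
  [:: 2; 1; 2; 2; 0; 0; 1; 1; 1; 0; 0];
  [:: 1; 2; 1; 1; 0; 0; 2; 2; 0; 1; 0];
  [:: 1; 2; 1; 1; 0; 0; 2; 2; 0; 0; 1];
  [:: 2; 1; 1; 2; 0; 0; 2; 0; 1; 1; 0];
  [:: 1; 1; 1; 2; 0; 0; 1; 0; 2; 0; 2];
  [:: 1; 1; 2; 1; 0; 0; 2; 0; 0; 1; 2];
  [:: 1; 1; 2; 1; 0; 0; 0; 1; 1; 1; 0];
  [:: 2; 2; 2; 1; 0; 0; 0; 1; 1; 0; 1];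
  [:: 2; 2; 1; 1; 0; 0; 0; 1; 0; 1; 2];
  [:: 1; 1; 1; 2; 0; 0; 0; 0; 2; 1; 2];
  [:: 1; 1; 1; 0; 1; 1; 2; 1; 0; 0; 0];
  [:: 2; 2; 1; 0; 1; 1; 1; 0; 2; 0; 0];
  [:: 1; 1; 2; 0; 1; 2; 1; 0; 0; 2; 0];
  [:: 2; 1; 1; 0; 1; 2; 2; 0; 0; 0; 1];
  [:: 1; 1; 1; 0; 1; 1; 0; 1; 2; 0; 0];
  [:: 1; 1; 1; 0; 1; 1; 0; 1; 0; 2; 0];
  [:: 1; 1; 1; 0; 1; 1; 0; 1; 0; 0; 2];
  [:: 2; 1; 2; 0; 1; 1; 0; 0; 2; 1; 0];
  [:: 1; 1; 2; 0; 1; 2; 0; 0; 2; 0; 1];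
  [:: 2; 2; 1; 0; 1; 1; 0; 0; 0; 2; 1];
  [:: 1; 1; 2; 0; 2; 0; 2; 1; 1; 0; 0];
  [:: 1; 2; 1; 0; 2; 0; 1; 1; 0; 2; 0];
  [:: 1; 2; 2; 0; 1; 0; 2; 1; 0; 0; 1];
  [:: 1; 1; 2; 0; 2; 0; 2; 0; 1; 1; 0];
  [:: 2; 2; 1; 0; 1; 0; 1; 0; 2; 0; 1];
  [:: 2; 1; 2; 0; 2; 0; 1; 0; 0; 1; 1];
  [:: 1; 1; 1; 0; 2; 0; 0; 2; 2; 1; 0];
  [:: 1; 2; 1; 0; 1; 0; 0; 2; 1; 0; 2];
  [:: 2; 2; 1; 0; 1; 0; 0; 1; 0; 1; 2];
  [:: 2; 1; 1; 0; 1; 0; 0; 0; 1; 1; 1];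
  [:: 1; 1; 1; 0; 0; 2; 1; 2; 2; 0; 0];
  [:: 2; 1; 1; 0; 0; 1; 1; 2; 0; 2; 0];
  [:: 1; 2; 2; 0; 0; 1; 1; 1; 0; 0; 2];
  [:: 1; 2; 1; 0; 0; 2; 1; 0; 1; 2; 0];
  [:: 2; 1; 1; 0; 0; 2; 2; 0; 1; 0; 1];
  [:: 2; 1; 1; 0; 0; 2; 2; 0; 0; 1; 1];
  [:: 1; 2; 1; 0; 0; 2; 0; 1; 1; 2; 0];
  [:: 1; 1; 2; 0; 0; 2; 0; 1; 1; 0; 2];
  [:: 1; 1; 2; 0; 0; 1; 0; 2; 0; 2; 1];
  [:: 1; 2; 1; 0; 0; 2; 0; 0; 1; 2; 1];
  [:: 1; 2; 2; 0; 0; 0; 1; 2; 1; 1; 0];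
  [:: 1; 2; 1; 0; 0; 0; 1; 1; 1; 0; 1];
  [:: 2; 2; 1; 0; 0; 0; 1; 1; 0; 1; 2];
  [:: 2; 1; 1; 0; 0; 0; 1; 0; 1; 2; 2];
  [:: 1; 1; 2; 0; 0; 0; 0; 2; 1; 2; 1];
  [:: 1; 1; 0; 1; 2; 2; 2; 1; 0; 0; 0];
  [:: 2; 1; 0; 2; 1; 2; 1; 0; 1; 0; 0];
  [:: 1; 1; 0; 2; 1; 1; 2; 0; 0; 2; 0];
  [:: 1; 1; 0; 1; 1; 2; 1; 0; 0; 0; 1];
  [:: 2; 1; 0; 2; 1; 2; 0; 1; 1; 0; 0];
  [:: 1; 1; 0; 1; 1; 2; 0; 2; 0; 2; 0];
  [:: 2; 1; 0; 1; 1; 1; 0; 2; 0; 0; 2];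
  [:: 1; 2; 0; 1; 2; 1; 0; 0; 2; 1; 0];
  [:: 1; 2; 0; 1; 2; 1; 0; 0; 2; 0; 1];
  [:: 1; 1; 0; 1; 2; 2; 0; 0; 0; 1; 2];
  [:: 2; 1; 0; 1; 2; 0; 1; 2; 1; 0; 0];
  [:: 2; 1; 0; 1; 1; 0; 2; 2; 0; 1; 0];
  [:: 1; 1; 0; 1; 1; 0; 1; 2; 0; 0; 1];
  [:: 1; 1; 0; 2; 2; 0; 1; 0; 2; 1; 0];
  [:: 1; 1; 0; 1; 1; 0; 1; 0; 2; 0; 1];
  [:: 1; 1; 0; 1; 1; 0; 1; 0; 0; 2; 1];
  [:: 1; 1; 0; 1; 2; 0; 0; 1; 1; 1; 0];
  [:: 1; 2; 0; 1; 1; 0; 0; 2; 1; 0; 2];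
  [:: 1; 2; 0; 1; 2; 0; 0; 2; 0; 1; 1];
  [:: 2; 1; 0; 1; 1; 0; 0; 0; 2; 1; 2];
  [:: 2; 2; 0; 1; 0; 1; 2; 1; 1; 0; 0];
  [:: 1; 1; 0; 2; 0; 1; 2; 1; 0; 2; 0];
  [:: 1; 2; 0; 2; 0; 2; 1; 1; 0; 0; 1];
  [:: 2; 2; 0; 1; 0; 2; 1; 0; 1; 1; 0];
  [:: 2; 1; 0; 2; 0; 1; 1; 0; 2; 0; 1];
  [:: 2; 2; 0; 1; 0; 2; 1; 0; 0; 1; 1];
  [:: 1; 1; 0; 1; 0; 2; 0; 1; 1; 1; 0];
  [:: 1; 2; 0; 2; 0; 2; 0; 1; 1; 0; 1];
  [:: 2; 1; 0; 1; 0; 1; 0; 2; 0; 1; 2];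
  [:: 1; 2; 0; 2; 0; 1; 0; 0; 1; 1; 2];
  [:: 1; 1; 0; 1; 0; 0; 2; 1; 1; 1; 0];
  [:: 1; 1; 0; 2; 0; 0; 2; 2; 1; 0; 1];
  [:: 2; 1; 0; 1; 0; 0; 2; 1; 0; 2; 1];
  [:: 2; 1; 0; 1; 0; 0; 1; 0; 1; 2; 2];
  [:: 1; 1; 0; 1; 0; 0; 0; 1; 1; 1; 2];
  [:: 2; 2; 0; 0; 1; 1; 2; 1; 1; 0; 0];
  [:: 2; 1; 0; 0; 1; 1; 2; 2; 0; 1; 0];
  [:: 1; 1; 0; 0; 2; 1; 2; 2; 0; 0; 1];
  [:: 1; 2; 0; 0; 1; 1; 1; 0; 1; 1; 0];
  [:: 1; 1; 0; 0; 1; 1; 2; 0; 2; 0; 2];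
  [:: 2; 2; 0; 0; 1; 1; 1; 0; 0; 2; 1];
  [:: 1; 1; 0; 0; 2; 1; 0; 2; 1; 2; 0];
  [:: 2; 1; 0; 0; 2; 1; 0; 1; 2; 0; 1];
  [:: 1; 1; 0; 0; 2; 2; 0; 1; 0; 1; 2];
  [:: 1; 1; 0; 0; 2; 2; 0; 0; 1; 1; 2];
  [:: 1; 2; 0; 0; 2; 0; 1; 1; 1; 2; 0];
  [:: 2; 1; 0; 0; 2; 0; 1; 1; 2; 0; 1];
  [:: 1; 2; 0; 0; 2; 0; 1; 1; 0; 2; 1];
  [:: 1; 2; 0; 0; 1; 0; 2; 0; 2; 1; 1];
  [:: 2; 1; 0; 0; 2; 0; 0; 1; 2; 1; 1];
  [:: 1; 1; 0; 0; 0; 2; 1; 2; 2; 1; 0];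
  [:: 2; 2; 0; 0; 0; 1; 2; 1; 1; 0; 1];
  [:: 2; 1; 0; 0; 0; 1; 1; 1; 0; 1; 1];
  [:: 2; 1; 0; 0; 0; 1; 1; 0; 1; 2; 2];
  [:: 1; 1; 0; 0; 0; 1; 0; 1; 2; 2; 2];
  [:: 1; 2; 0; 0; 0; 0; 2; 1; 2; 1; 1];
  [:: 1; 0; 1; 2; 2; 2; 1; 1; 0; 0; 0];
  [:: 1; 0; 1; 2; 2; 2; 1; 0; 1; 0; 0];
  [:: 2; 0; 2; 1; 1; 1; 2; 0; 0; 1; 0];
  [:: 1; 0; 1; 2; 2; 2; 1; 0; 0; 0; 1];
  [:: 2; 0; 1; 1; 1; 2; 0; 1; 2; 0; 0];
  [:: 2; 0; 1; 2; 2; 1; 0; 1; 0; 1; 0];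
  [:: 1; 0; 2; 1; 2; 1; 0; 1; 0; 0; 2];
  [:: 1; 0; 1; 2; 1; 1; 0; 0; 2; 2; 0];
  [:: 1; 0; 2; 1; 1; 2; 0; 0; 2; 0; 1];
  [:: 1; 0; 1; 1; 2; 1; 0; 0; 0; 1; 1];
  [:: 2; 0; 1; 1; 2; 0; 1; 2; 1; 0; 0];
  [:: 2; 0; 1; 1; 1; 0; 1; 1; 0; 1; 0];
  [:: 1; 0; 2; 1; 2; 0; 1; 1; 0; 0; 2];
  [:: 2; 0; 1; 2; 1; 0; 2; 0; 1; 1; 0];
  [:: 1; 0; 1; 1; 2; 0; 2; 0; 2; 0; 1];
  [:: 1; 0; 1; 1; 1; 0; 2; 0; 0; 2; 2];
  [:: 2; 0; 2; 1; 1; 0; 0; 1; 1; 2; 0];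
  [:: 2; 0; 1; 2; 1; 0; 0; 2; 1; 0; 1];
  [:: 2; 0; 1; 2; 1; 0; 0; 2; 0; 1; 1];
  [:: 1; 0; 1; 2; 2; 0; 0; 0; 1; 2; 1];
  [:: 2; 0; 1; 1; 0; 2; 1; 1; 2; 0; 0];
  [:: 2; 0; 1; 1; 0; 1; 1; 2; 0; 2; 0];
  [:: 1; 0; 1; 2; 0; 1; 2; 1; 0; 0; 2];
  [:: 1; 0; 2; 1; 0; 1; 1; 0; 2; 2; 0];
  [:: 1; 0; 1; 1; 0; 2; 2; 0; 1; 0; 2];
  [:: 1; 0; 1; 1; 0; 1; 2; 0; 0; 1; 1];
  [:: 2; 0; 1; 1; 0; 2; 0; 1; 2; 1; 0];
  [:: 1; 0; 2; 2; 0; 1; 0; 2; 1; 0; 1];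
  [:: 1; 0; 1; 1; 0; 1; 0; 2; 0; 1; 1];
  [:: 1; 0; 1; 1; 0; 1; 0; 0; 2; 1; 1];
  [:: 1; 0; 2; 1; 0; 0; 1; 1; 2; 2; 0];
  [:: 1; 0; 1; 2; 0; 0; 1; 1; 1; 0; 1];
  [:: 2; 0; 1; 1; 0; 0; 2; 1; 0; 2; 1];
  [:: 2; 0; 1; 2; 0; 0; 2; 0; 1; 1; 1];
  [:: 1; 0; 1; 1; 0; 0; 0; 2; 1; 2; 2];
  [:: 1; 0; 2; 0; 2; 1; 1; 1; 2; 0; 0];
  [:: 1; 0; 2; 0; 1; 2; 2; 1; 0; 1; 0];
  [:: 2; 0; 1; 0; 1; 2; 1; 1; 0; 0; 2];
  [:: 1; 0; 2; 0; 1; 1; 1; 0; 1; 1; 0];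
  [:: 1; 0; 2; 0; 1; 2; 1; 0; 2; 0; 1];
  [:: 2; 0; 2; 0; 2; 1; 1; 0; 0; 1; 1];
  [:: 2; 0; 2; 0; 1; 1; 0; 1; 1; 2; 0];
  [:: 2; 0; 1; 0; 2; 1; 0; 1; 1; 0; 2];
  [:: 1; 0; 2; 0; 1; 1; 0; 2; 0; 1; 2];
  [:: 2; 0; 1; 0; 2; 1; 0; 0; 1; 1; 2];
  [:: 1; 0; 1; 0; 2; 0; 1; 2; 2; 1; 0];
  [:: 1; 0; 1; 0; 2; 0; 1; 1; 1; 0; 1];
  [:: 2; 0; 2; 0; 2; 0; 1; 1; 0; 1; 1];
  [:: 1; 0; 1; 0; 1; 0; 2; 0; 1; 2; 2];
  [:: 2; 0; 2; 0; 1; 0; 0; 1; 1; 2; 1];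
  [:: 2; 0; 1; 0; 0; 1; 1; 2; 1; 2; 0];
  [:: 1; 0; 1; 0; 0; 2; 1; 1; 1; 0; 1];
  [:: 1; 0; 2; 0; 0; 2; 2; 1; 0; 1; 1];
  [:: 1; 0; 1; 0; 0; 2; 1; 0; 2; 1; 2];
  [:: 1; 0; 1; 0; 0; 1; 0; 1; 2; 2; 2];
  [:: 1; 0; 1; 0; 0; 0; 1; 1; 1; 2; 1];
  [:: 2; 0; 0; 1; 2; 1; 1; 2; 1; 0; 0];
  [:: 1; 0; 0; 1; 1; 2; 1; 2; 0; 2; 0];
  [:: 2; 0; 0; 1; 1; 2; 1; 1; 0; 0; 2];
  [:: 1; 0; 0; 2; 1; 1; 1; 0; 1; 1; 0];
  [:: 1; 0; 0; 1; 1; 2; 2; 0; 1; 0; 2];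
  [:: 1; 0; 0; 2; 1; 2; 2; 0; 0; 1; 1];
  [:: 2; 0; 0; 2; 2; 1; 0; 1; 1; 1; 0];
  [:: 2; 0; 0; 1; 1; 1; 0; 1; 1; 0; 1];
  [:: 1; 0; 0; 1; 1; 2; 0; 2; 0; 2; 1];
  [:: 2; 0; 0; 1; 1; 1; 0; 0; 2; 1; 2];
  [:: 1; 0; 0; 2; 1; 0; 2; 1; 2; 1; 0];
  [:: 1; 0; 0; 2; 1; 0; 2; 1; 2; 0; 1];
  [:: 1; 0; 0; 2; 1; 0; 1; 2; 0; 1; 2];
  [:: 1; 0; 0; 2; 2; 0; 1; 0; 1; 2; 1];
  [:: 1; 0; 0; 2; 2; 0; 0; 1; 1; 2; 1];
  [:: 1; 0; 0; 1; 0; 1; 2; 2; 2; 1; 0];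
  [:: 2; 0; 0; 2; 0; 1; 1; 1; 2; 0; 1];
  [:: 1; 0; 0; 2; 0; 1; 1; 2; 0; 1; 2];
  [:: 2; 0; 0; 2; 0; 1; 1; 0; 2; 1; 1];
  [:: 2; 0; 0; 1; 0; 2; 0; 2; 1; 1; 1];
  [:: 1; 0; 0; 2; 0; 0; 1; 2; 1; 1; 2];
  [:: 1; 0; 0; 0; 1; 1; 1; 2; 1; 1; 0];
  [:: 1; 0; 0; 0; 2; 1; 2; 2; 1; 0; 1];
  [:: 2; 0; 0; 0; 1; 2; 1; 1; 0; 1; 2];
  [:: 1; 0; 0; 0; 1; 1; 1; 0; 1; 1; 2];
  [:: 1; 0; 0; 0; 1; 1; 0; 1; 2; 2; 2];
  [:: 1; 0; 0; 0; 1; 0; 1; 2; 2; 2; 1];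
  [:: 2; 0; 0; 0; 0; 2; 1; 2; 1; 1; 1];
  [:: 0; 2; 1; 2; 1; 1; 1; 2; 0; 0; 0];
  [:: 0; 1; 1; 1; 2; 1; 1; 0; 1; 0; 0];
  [:: 0; 1; 2; 1; 1; 2; 1; 0; 0; 2; 0];
  [:: 0; 1; 2; 2; 2; 1; 1; 0; 0; 0; 1];
  [:: 0; 2; 1; 2; 2; 1; 0; 1; 1; 0; 0];
  [:: 0; 1; 1; 2; 1; 2; 0; 2; 0; 1; 0];
  [:: 0; 1; 2; 2; 2; 1; 0; 1; 0; 0; 1];
  [:: 0; 1; 1; 2; 1; 1; 0; 0; 2; 2; 0];
  [:: 0; 2; 1; 1; 1; 2; 0; 0; 1; 0; 2];
  [:: 0; 1; 2; 2; 2; 1; 0; 0; 0; 1; 1];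
  [:: 0; 1; 2; 1; 1; 0; 1; 2; 2; 0; 0];
  [:: 0; 2; 1; 1; 1; 0; 1; 1; 0; 1; 0];
  [:: 0; 1; 1; 1; 2; 0; 1; 2; 0; 0; 2];
  [:: 0; 1; 1; 2; 2; 0; 1; 0; 2; 1; 0];
  [:: 0; 1; 2; 2; 1; 0; 1; 0; 1; 0; 2];
  [:: 0; 2; 1; 2; 1; 0; 1; 0; 0; 2; 1];
  [:: 0; 2; 1; 2; 2; 0; 0; 1; 1; 1; 0];
  [:: 0; 1; 2; 1; 1; 0; 0; 2; 2; 0; 1];
  [:: 0; 2; 1; 1; 2; 0; 0; 2; 0; 1; 1];
  [:: 0; 1; 1; 2; 1; 0; 0; 0; 1; 1; 1];
  [:: 0; 1; 1; 1; 0; 1; 1; 2; 1; 0; 0];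
  [:: 0; 2; 2; 1; 0; 1; 1; 1; 0; 2; 0];
  [:: 0; 1; 1; 2; 0; 1; 2; 1; 0; 0; 2];
  [:: 0; 1; 1; 1; 0; 1; 1; 0; 1; 2; 0];
  [:: 0; 1; 1; 1; 0; 1; 1; 0; 1; 0; 2];
  [:: 0; 2; 1; 2; 0; 1; 1; 0; 0; 2; 1];
  [:: 0; 1; 1; 2; 0; 2; 0; 2; 1; 1; 0];
  [:: 0; 1; 2; 1; 0; 2; 0; 1; 1; 0; 2];
  [:: 0; 1; 1; 2; 0; 2; 0; 2; 0; 1; 1];
  [:: 0; 1; 1; 1; 0; 2; 0; 0; 2; 2; 1];
  [:: 0; 1; 1; 1; 0; 0; 2; 1; 2; 2; 0];
  [:: 0; 2; 1; 1; 0; 0; 1; 1; 2; 0; 2];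
  [:: 0; 1; 2; 1; 0; 0; 2; 1; 0; 1; 2];
  [:: 0; 1; 2; 1; 0; 0; 2; 0; 1; 1; 2];
  [:: 0; 1; 2; 2; 0; 0; 0; 1; 2; 1; 1];
  [:: 0; 1; 1; 0; 1; 2; 2; 2; 1; 0; 0];
  [:: 0; 2; 1; 0; 2; 1; 2; 1; 0; 1; 0];
  [:: 0; 1; 1; 0; 2; 1; 1; 2; 0; 0; 2];
  [:: 0; 2; 1; 0; 2; 1; 2; 0; 1; 1; 0];
  [:: 0; 1; 1; 0; 1; 1; 2; 0; 2; 0; 2];
  [:: 0; 1; 2; 0; 1; 2; 1; 0; 0; 2; 1];
  [:: 0; 2; 1; 0; 1; 2; 0; 1; 2; 1; 0];
  [:: 0; 2; 1; 0; 1; 1; 0; 2; 2; 0; 1];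
  [:: 0; 1; 1; 0; 2; 2; 0; 1; 0; 2; 1];
  [:: 0; 1; 1; 0; 1; 2; 0; 0; 1; 1; 1];
  [:: 0; 2; 2; 0; 1; 0; 1; 2; 1; 1; 0];
  [:: 0; 1; 1; 0; 2; 0; 1; 2; 1; 0; 2];
  [:: 0; 2; 2; 0; 1; 0; 2; 1; 0; 1; 1];
  [:: 0; 1; 1; 0; 1; 0; 2; 0; 1; 1; 1];
  [:: 0; 1; 1; 0; 1; 0; 0; 2; 1; 1; 1];
  [:: 0; 2; 2; 0; 0; 1; 1; 2; 1; 1; 0];
  [:: 0; 2; 1; 0; 0; 1; 1; 2; 2; 0; 1];
  [:: 0; 1; 2; 0; 0; 1; 1; 1; 0; 1; 1];
  [:: 0; 1; 1; 0; 0; 2; 1; 0; 2; 1; 2];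
  [:: 0; 1; 2; 0; 0; 2; 0; 1; 1; 1; 2];
  [:: 0; 1; 1; 0; 0; 0; 2; 1; 2; 2; 1];
  [:: 0; 1; 0; 1; 2; 2; 2; 1; 1; 0; 0];
  [:: 0; 1; 0; 1; 2; 2; 2; 1; 0; 1; 0];
  [:: 0; 2; 0; 2; 1; 1; 1; 2; 0; 0; 1];
  [:: 0; 2; 0; 1; 1; 1; 2; 0; 1; 2; 0];
  [:: 0; 2; 0; 1; 2; 2; 1; 0; 1; 0; 1];
  [:: 0; 1; 0; 1; 2; 1; 1; 0; 0; 2; 2];
  [:: 0; 2; 0; 1; 1; 2; 0; 1; 2; 1; 0];
  [:: 0; 2; 0; 1; 1; 1; 0; 1; 1; 0; 1];
  [:: 0; 2; 0; 1; 2; 1; 0; 2; 0; 1; 1];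
  [:: 0; 2; 0; 2; 1; 1; 0; 0; 1; 1; 2];
  [:: 0; 2; 0; 1; 1; 0; 2; 1; 1; 2; 0];
  [:: 0; 2; 0; 1; 1; 0; 1; 1; 2; 0; 2];
  [:: 0; 1; 0; 2; 1; 0; 1; 1; 0; 2; 2];
  [:: 0; 2; 0; 1; 1; 0; 2; 0; 1; 2; 1];
  [:: 0; 1; 0; 2; 1; 0; 0; 1; 1; 2; 2];
  [:: 0; 1; 0; 2; 0; 2; 1; 1; 1; 2; 0];
  [:: 0; 1; 0; 2; 0; 1; 2; 2; 1; 0; 1];
  [:: 0; 1; 0; 2; 0; 1; 1; 1; 0; 1; 1];
  [:: 0; 2; 0; 2; 0; 1; 1; 0; 1; 1; 2];
  [:: 0; 1; 0; 1; 0; 2; 0; 1; 2; 2; 1];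
  [:: 0; 2; 0; 1; 0; 0; 1; 1; 2; 1; 2];
  [:: 0; 2; 0; 0; 1; 2; 1; 1; 2; 1; 0];
  [:: 0; 1; 0; 0; 1; 1; 2; 1; 2; 0; 2];
  [:: 0; 1; 0; 0; 2; 1; 1; 1; 0; 1; 1];
  [:: 0; 2; 0; 0; 2; 2; 1; 0; 1; 1; 1];
  [:: 0; 1; 0; 0; 2; 1; 0; 2; 1; 2; 1];
  [:: 0; 1; 0; 0; 1; 0; 1; 2; 2; 2; 1];
  [:: 0; 1; 0; 0; 0; 1; 1; 1; 2; 1; 1];
  [:: 0; 0; 2; 1; 2; 1; 1; 1; 2; 0; 0];
  [:: 0; 0; 1; 1; 1; 2; 1; 1; 0; 1; 0];
  [:: 0; 0; 1; 2; 1; 1; 2; 1; 0; 0; 2];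
  [:: 0; 0; 2; 1; 2; 2; 1; 0; 1; 1; 0];
  [:: 0; 0; 1; 1; 2; 1; 2; 0; 2; 0; 1];
  [:: 0; 0; 1; 1; 2; 1; 1; 0; 0; 2; 2];
  [:: 0; 0; 1; 2; 1; 1; 0; 1; 2; 2; 0];
  [:: 0; 0; 2; 1; 1; 1; 0; 1; 1; 0; 1];
  [:: 0; 0; 1; 1; 2; 2; 0; 1; 0; 2; 1];
  [:: 0; 0; 2; 1; 2; 2; 0; 0; 1; 1; 1];
  [:: 0; 0; 1; 1; 1; 0; 1; 1; 2; 1; 0];
  [:: 0; 0; 2; 2; 1; 0; 1; 1; 1; 0; 2];
  [:: 0; 0; 1; 1; 1; 0; 1; 1; 0; 1; 2];
  [:: 0; 0; 1; 1; 2; 0; 2; 0; 2; 1; 1];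
  [:: 0; 0; 1; 1; 1; 0; 0; 2; 1; 2; 2];
  [:: 0; 0; 1; 1; 0; 1; 2; 2; 2; 1; 0];
  [:: 0; 0; 2; 1; 0; 2; 1; 2; 1; 0; 1];
  [:: 0; 0; 2; 1; 0; 2; 1; 2; 0; 1; 1];
  [:: 0; 0; 2; 1; 0; 1; 2; 0; 1; 2; 1];
  [:: 0; 0; 2; 2; 0; 1; 0; 1; 2; 1; 1];
  [:: 0; 0; 2; 2; 0; 0; 1; 1; 2; 1; 1];
  [:: 0; 0; 1; 0; 1; 2; 2; 2; 1; 1; 0];
  [:: 0; 0; 1; 0; 1; 2; 2; 2; 1; 0; 1];
  [:: 0; 0; 2; 0; 1; 1; 1; 2; 0; 1; 2];
  [:: 0; 0; 2; 0; 1; 1; 2; 0; 1; 2; 1];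
  [:: 0; 0; 2; 0; 1; 1; 0; 2; 1; 1; 2];
  [:: 0; 0; 1; 0; 2; 0; 2; 1; 1; 1; 2];
  [:: 0; 0; 2; 0; 0; 1; 2; 1; 1; 2; 1];
  [:: 0; 0; 0; 2; 1; 2; 1; 1; 1; 2; 0];
  [:: 0; 0; 0; 1; 1; 1; 2; 1; 1; 0; 1];
  [:: 0; 0; 0; 2; 1; 2; 2; 1; 0; 1; 1];
  [:: 0; 0; 0; 1; 2; 1; 1; 0; 1; 2; 2];
  [:: 0; 0; 0; 1; 1; 1; 0; 1; 1; 2; 1];
  [:: 0; 0; 0; 1; 1; 0; 1; 2; 2; 2; 1];
  [:: 0; 0; 0; 1; 0; 1; 2; 2; 2; 1; 1];
  [:: 0; 0; 0; 0; 2; 1; 2; 1; 1; 1; 2]].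

Definition L2 : seq (seq nat) := map opp_seq L1.

Lemma L0_codes : codes_of_weight 11 3 L0.
Proof. by vm_compute. Qed.

Lemma L1_codes : codes_of_weight 11 7 L1.
Proof. by vm_compute. Qed.

Lemma size_L0 : size L0 = 37.
Proof. by []. Qed.

Lemma size_L1 : size L1 = 'C(11, 7).
Proof. by vm_compute. Qed.

Lemma triplewise_covers_L0 : triplewise covers L0.
Proof. by vm_compute. Qed.

Lemma triplewise_covers_L1 : triplewise covers L1.
Proof. by vm_compute. Qed.

Lemma covers_L0_L0_L12 : all (fun x => allrel (covers x) L0 (L1 ++ L2)) L0.
Proof. by vm_compute. Qed.

Lemma covers_L0_L1_L2 : all (fun x => allrel (covers x) L1 L2) L0.
Proof. by vm_compute. Qed.

Lemma ternary_L0 : all (ternary 11) L0.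
Proof. by case/and3P: L0_codes. Qed.

Lemma ternary_L1 : all (ternary 11) L1.
Proof. by case/and3P: L1_codes. Qed.

Lemma ternary_L2 : all (ternary 11) L2.
Proof. by rewrite all_map; apply: sub_all ternary_L1 => l; apply: ternary_opp_seq. Qed.

Definition S0 : {set vec 11} := set_of_seqs 11 L0.
Definition S1 : {set vec 11} := set_of_seqs 11 L1.
Definition S2 : {set vec 11} := [set (- s)%R | s : vec 11 in S1].

Lemma S2E : S2 = set_of_seqs 11 L2.
Proof. by rewrite set_of_opp_seqs // ternary_L1. Qed.

Lemma admissible_S0 : admissible S0.
Proof. exact: admissible_set_of_seqs L0_codes triplewise_covers_L0. Qed.

Lemma admissible_S1 : admissible S1.
Proof. exact: admissible_set_of_seqs L1_codes triplewise_covers_L1. Qed.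

Lemma admissible_S2 : admissible S2.
Proof. exact: admissible_opp admissible_S1. Qed.

Lemma weight_S0 : {in S0, forall s, weight s = 3}.
Proof. exact: weight_set_of_seqs L0_codes. Qed.

Lemma weight_S1 : {in S1, forall s, weight s = 7}.
Proof. exact: weight_set_of_seqs L1_codes. Qed.

Lemma weight_S2 : {in S2, forall s, weight s = 7}.
Proof. by move=> s; rewrite mem_opp_set => /weight_S1; rewrite weight_opp. Qed.

Lemma card_S0 : #|S0| = 37.
Proof. by rewrite (card_set_of_seqs L0_codes) size_L0. Qed.

Lemma card_S1 : #|S1| = 'C(11, 7).
Proof. by rewrite (card_set_of_seqs L1_codes) size_L1. Qed.

Lemma card_S2 : #|S2| = 'C(11, 7).
Proof. by rewrite card_imset ?card_S1 //; exact: oppr_inj. Qed.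

Lemma covered_S0_S0_S12 : {in S0 & S0 & S1 :|: S2, forall x y z, covered x y z}.
Proof.
have ternary_L12 : all (ternary 11) (L1 ++ L2) by rewrite all_cat ternary_L1 ternary_L2.
rewrite S2E /S1 -set_of_seqs_cat.
exact: covered_set_of_seqs ternary_L0 ternary_L0 ternary_L12 covers_L0_L0_L12.
Qed.

Lemma covered_S0_S1_S2 : {in S0 & S1 & S2, forall x y z, covered x y z}.
Proof.
rewrite S2E.
exact: covered_set_of_seqs ternary_L0 ternary_L1 ternary_L2 covers_L0_L1_L2.
Qed.

Theorem lemma3p7 :
  exists S0 S1 S2 : {set vec 11},
    [/\ meta_extendable S0 S1 S2,
        #|S1| = 'C(11, 7) /\ (forall s, s \in S1 -> weight s = 7),
        #|S2| = 'C(11, 7) /\ (forall s, s \in S2 -> weight s = 7),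
        #|S0| = 37 /\ (forall s, s \in S0 -> weight s = 3) &
        (forall s s', s \in S0 -> s' \in S0 -> s != s' -> supp s != supp s')].
Proof.
exists S0, S1, S2; split.
- split; [split | | exact: covered_S0_S0_S12 | exact: covered_S0_S1_S2].
  + exact: admissible_S0.
  + exact: admissible_S1.
  + exact: admissible_S2.
  + by move=> s s' /weight_S0-> /setUP[/weight_S1|/weight_S2]->.
- split; [exact: card_S1 | exact: weight_S1].
- split; [exact: card_S2 | exact: weight_S2].
- split; [exact: card_S0 | exact: weight_S0].
- move=> s s' S0s S0s'; apply: contraNneq => eq_supp.
  by rewrite (supp_inj_set_of_seqs L0_codes S0s S0s' eq_supp).
Qed.
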